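(* Let $\frac\pi4\le\gamma_1\le\frac\pi2$ and $\gamma_2=\frac\pi2-\gamma_1$, and for $x_3\in[-1,1]$ let $\rho(x_3)=\frac12(\Sigma_0+x_3\Sigma_3)$. Then $$\min_{x_3\in[-1,1]} g(\rho(x_3))=\frac{[1+\cos(2\gamma_1)+\sqrt2\sin\gamma_1]^2}{[3+\cos(2\gamma_1)]^2},$$ attained at $x_3=\frac{2\sin\gamma_1(\sin\gamma_1-\sqrt2)}{3+\cos(2\gamma_1)}$; this minimum value is increasing in $\gamma_1$ on $[\frac\pi4,\frac\pi2]$, so its smallest value $\frac49$ occurs at $\gamma_1=\frac\pi4$, $x_3=-\frac13$.
   Context: On two qubits, let $\sigma_1,\sigma_2,\sigma_3$ denote the Pauli matrices acting on the first qubit and $\tau_1,\tau_2,\tau_3$ those acting on the second qubit. For parameters $\gamma_1,\gamma_2$ set $u=\cos\gamma_1\cos\gamma_2$, $v=\sin\gamma_1\sin\gamma_2$, $z_1=\sin\gamma_1\cos\gamma_2$, $z_2=\cos\gamma_1\sin\gamma_2$, and define $\Sigma_0=\frac12(I+u\sigma_3+v\tau_3+z_1\sigma_1\tau_1+z_2\sigma_2\tau_2)$ and $\Sigma_3=\frac12(v\sigma_3+u\tau_3-z_2\sigma_1\tau_1-z_1\sigma_2\tau_2+\sigma_3\tau_3)$. For a two-qubit density matrix $\rho$, $g(\rho):=\max\operatorname{tr}[\rho(\rho_1\otimes\rho_2)]$ over all pure single-qubit states $\rho_1,\rho_2$. *)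

From Stdlib Require Import Reals Lra.
Open Scope R_scope.

Definition C : Type := (R * R)%type.
Definition Cre (z : C) : R := fst z.
Definition Cim (z : C) : R := snd z.
Definition Cadd (z w : C) : C := (fst z + fst w, snd z + snd w).
Definition Cmul (z w : C) : C :=
  (fst z * fst w - snd z * snd w, fst z * snd w + snd z * fst w).
Definition Cconj (z : C) : C := (fst z, - snd z).
Definition RtoC (r : R) : C := (r, 0).
Definition Cnorm2 (z : C) : R := fst z * fst z + snd z * snd z.
Definition C0 : C := (0, 0).
Definition C1 : C := (1, 0).
Definition Ci : C := (0, 1).

Fixpoint csum (n : nat) (f : nat -> C) : C :=
  match n with
  | O => C0
  | S m => Cadd (csum m f) (f m)
  end.

(** Matrices as functions of (row, column) indices; an n x n matrix
    uses indices 0..n-1. *)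
Definition Mat : Type := nat -> nat -> C.
Definition mmul (n : nat) (A B : Mat) : Mat :=
  fun i j => csum n (fun k => Cmul (A i k) (B k j)).
Definition madd (A B : Mat) : Mat := fun i j => Cadd (A i j) (B i j).
Definition mscale (r : R) (A : Mat) : Mat := fun i j => Cmul (RtoC r) (A i j).
Definition trace (n : nat) (A : Mat) : C := csum n (fun i => A i i).
Definition Id (i j : nat) : C := if Nat.eqb i j then C1 else C0.

(** Kronecker product of two 2x2 matrices (first factor = first qubit):
    index of basis vector |a b> is 2a+b. *)
Definition kron (A B : Mat) : Mat :=
  fun i j => Cmul (A (Nat.div i 2) (Nat.div j 2)) (B (Nat.modulo i 2) (Nat.modulo j 2)).

Definition pauli1 : Mat := fun i j =>
  match i, j with 0%nat, 1%nat => C1 | 1%nat, 0%nat => C1 | _, _ => C0 end.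
Definition pauli2 : Mat := fun i j =>
  match i, j with 0%nat, 1%nat => (0, -1) | 1%nat, 0%nat => Ci | _, _ => C0 end.
Definition pauli3 : Mat := fun i j =>
  match i, j with 0%nat, 0%nat => C1 | 1%nat, 1%nat => (-1, 0) | _, _ => C0 end.

Definition sig1 : Mat := kron pauli1 Id.
Definition sig2 : Mat := kron pauli2 Id.
Definition sig3 : Mat := kron pauli3 Id.
Definition tau1 : Mat := kron Id pauli1.
Definition tau2 : Mat := kron Id pauli2.
Definition tau3 : Mat := kron Id pauli3.

Definition u_ (g1 g2 : R) : R := cos g1 * cos g2.
Definition v_ (g1 g2 : R) : R := sin g1 * sin g2.
Definition z1_ (g1 g2 : R) : R := sin g1 * cos g2.
Definition z2_ (g1 g2 : R) : R := cos g1 * sin g2.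

Definition Sigma0 (g1 g2 : R) : Mat :=
  mscale (1/2)
    (madd Id
    (madd (mscale (u_ g1 g2) sig3)
    (madd (mscale (v_ g1 g2) tau3)
    (madd (mscale (z1_ g1 g2) (mmul 4 sig1 tau1))
          (mscale (z2_ g1 g2) (mmul 4 sig2 tau2)))))).

Definition Sigma3 (g1 g2 : R) : Mat :=
  mscale (1/2)
    (madd (mscale (v_ g1 g2) sig3)
    (madd (mscale (u_ g1 g2) tau3)
    (madd (mscale (- z2_ g1 g2) (mmul 4 sig1 tau1))
    (madd (mscale (- z1_ g1 g2) (mmul 4 sig2 tau2))
          (mmul 4 sig3 tau3))))).

Definition rho (g1 g2 x3 : R) : Mat :=
  mscale (1/2) (madd (Sigma0 g1 g2) (mscale x3 (Sigma3 g1 g2))).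

Definition unit_vec (psi : nat -> C) : Prop :=
  Cnorm2 (psi 0%nat) + Cnorm2 (psi 1%nat) = 1.
Definition proj (psi : nat -> C) : Mat := fun i j => Cmul (psi i) (Cconj (psi j)).

(** tr[rho (rho1 ⊗ rho2)] (real part; it is real for Hermitian rho). *)
Definition overlap (r : Mat) (psi phi : nat -> C) : R :=
  Cre (trace 4 (mmul 4 r (kron (proj psi) (proj phi)))).

(** is_g r m : m = g(r) = max over pure product states of tr[r (rho1 ⊗ rho2)],
    i.e. m is attained and is an upper bound. *)
Definition is_g (r : Mat) (m : R) : Prop :=
  (exists psi phi, unit_vec psi /\ unit_vec phi /\ overlap r psi phi = m) /\
  (forall psi phi, unit_vec psi -> unit_vec phi -> overlap r psi phi <= m).

Definition Mval (g1 : R) : R :=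
  (1 + cos (2 * g1) + sqrt 2 * sin g1) ^ 2 / (3 + cos (2 * g1)) ^ 2.
Definition x3star (g1 : R) : R :=
  2 * sin g1 * (sin g1 - sqrt 2) / (3 + cos (2 * g1)).

From Pilot Require Import Defs.
From Stdlib Require Import Reals Lra Lia.
Open Scope R_scope.

(** Pure qubit states are described by their Bloch vectors a, b in S^2.  For
   gamma2 = pi/2 - gamma1, rho(x3) is an X-state and its overlap with a
   product state is the explicit function on S^2 x S^2
     xoverlap k p q x a b = 1/4 (1 + k (a3 + b3) + p a1 b1 + q a2 b2 + x a3 b3)
   with k = cos g1 sin g1 (1 + x3), p = sin^2 g1 - x3 cos^2 g1,
   q = cos^2 g1 - x3 sin^2 g1 and x = x3; so g(rho(x3)) is the maximum of
   xoverlap over S^2 x S^2 (is_g_sphere_max, overlap_rho).  Then: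
   - the maximum exists: maximising over b by Cauchy-Schwarz leaves a
     continuous function of a3 on [-1, 1] (sphere_max_exists);
   - one symmetric product state (a = b in the x-z plane) has overlap Mval g1
     for every x3, hence g(rho(x3)) >= Mval g1 (sym_value);
   - at x3 = x3star g1 a sum-of-squares identity bounds xoverlap by Mval g1
     (xoverlap_sos_bound, max_at_Xform), so the lower bound is attained;
   - writing Mval and x3star as rational functions of s = sin g1 and
     r = sqrt 2, monotonicity in g1 is a cross-multiplication (Mform_increasing).
*)

Definition unit3 (a1 a2 a3 : R) : Prop := a1 * a1 + a2 * a2 + a3 * a3 = 1.

(** Bloch vector of |psi>, i.e. the coordinates of |psi><psi| = (I + a.sigma)/2. *)
Definition bloch_x (psi : nat -> Defs.C) : R :=
  2 * (fst (psi 0%nat) * fst (psi 1%nat) + snd (psi 0%nat) * snd (psi 1%nat)).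
Definition bloch_y (psi : nat -> Defs.C) : R :=
  2 * (fst (psi 0%nat) * snd (psi 1%nat) - snd (psi 0%nat) * fst (psi 1%nat)).
Definition bloch_z (psi : nat -> Defs.C) : R :=
  Cnorm2 (psi 0%nat) - Cnorm2 (psi 1%nat).

Lemma bloch_unit (psi : nat -> Defs.C) :
  unit_vec psi -> unit3 (bloch_x psi) (bloch_y psi) (bloch_z psi).
Proof.
  unfold unit_vec, unit3; intros Hpsi.
  transitivity ((Cnorm2 (psi 0%nat) + Cnorm2 (psi 1%nat)) ^ 2).
  - unfold bloch_x, bloch_y, bloch_z, Cnorm2; ring.
  - rewrite Hpsi; ring.
Qed.

Lemma bloch_onto (a1 a2 a3 : R) : unit3 a1 a2 a3 ->
  exists psi, unit_vec psi /\
    bloch_x psi = a1 /\ bloch_y psi = a2 /\ bloch_z psi = a3.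
Proof.
  unfold unit3; intros Ha.
  destruct (Req_dec a3 (-1)) as [Hsouth | Hnot_south].
  -
    exists (fun i => match i with 0%nat => (0, 0) | _ => (1, 0) end).
    assert (a1 = 0) by nra. assert (a2 = 0) by nra. subst.
    unfold unit_vec, bloch_x, bloch_y, bloch_z, Cnorm2; simpl.
    repeat split; ring.
  -
    assert (Ha3 : -1 < a3) by nra.
    set (t := sqrt ((1 + a3) / 2)).
    assert (Ht2 : t * t = (1 + a3) / 2) by (apply sqrt_sqrt; lra).
    assert (Ht : 0 < t) by (apply sqrt_lt_R0; lra).
    clearbody t.
    exists (fun i => match i with 0%nat => (t, 0) | _ => (a1 / (2 * t), a2 / (2 * t)) end).
    unfold unit_vec, bloch_x, bloch_y, bloch_z, Cnorm2; simpl.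
    assert (Hlower : a1 / (2 * t) * (a1 / (2 * t)) + a2 / (2 * t) * (a2 / (2 * t))
                     = (a1 * a1 + a2 * a2) / (4 * (t * t))) by (field; lra).
    rewrite Hlower, Ht2.
    repeat split; field_simplify_eq; nra.
Qed.

Definition xstate (A B P1 P2 x : R) : Mat := fun i j =>
  match i, j with
  | 0%nat, 0%nat => ((1 + A + B + x) / 4, 0)
  | 1%nat, 1%nat => ((1 + A - B - x) / 4, 0)
  | 2%nat, 2%nat => ((1 - A + B - x) / 4, 0)
  | 3%nat, 3%nat => ((1 - A - B + x) / 4, 0)
  | 0%nat, 3%nat | 3%nat, 0%nat => ((P1 - P2) / 4, 0)
  | 1%nat, 2%nat | 2%nat, 1%nat => ((P1 + P2) / 4, 0)
  | _, _ => (0, 0)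
  end.

Ltac expand_matrices :=
  cbv beta iota zeta delta [overlap trace mmul rho Sigma0 Sigma3 madd mscale kron
    proj sig1 sig2 sig3 tau1 tau2 tau3 csum Nat.div Nat.modulo Nat.divmod Nat.sub
    fst snd Id Nat.eqb pauli1 pauli2 pauli3 Cmul Cadd Cconj RtoC
    Defs.C0 Defs.C1 Defs.Ci Cre Cnorm2 xstate].

Lemma rho_xstate (g1 g2 x : R) (i j : nat) : (i < 4)%nat -> (j < 4)%nat ->
  rho g1 g2 x i j =
  xstate (u_ g1 g2 + x * v_ g1 g2) (v_ g1 g2 + x * u_ g1 g2)
         (z1_ g1 g2 - x * z2_ g1 g2) (z2_ g1 g2 - x * z1_ g1 g2) x i j.
Proof.
  intros Hi Hj.
  destruct i as [|[|[|[|i]]]]; try lia; destruct j as [|[|[|[|j]]]]; try lia;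
    expand_matrices; f_equal; lra.
Qed.

Lemma csum_ext (n : nat) (f g : nat -> Defs.C) :
  (forall k, (k < n)%nat -> f k = g k) -> csum n f = csum n g.
Proof.
  induction n as [|n IH]; intros Hfg; simpl; [reflexivity|].
  rewrite IH by (intros; apply Hfg; lia). rewrite Hfg by lia. reflexivity.
Qed.

Lemma overlap_ext (r r' : Mat) (psi phi : nat -> Defs.C) :
  (forall i j, (i < 4)%nat -> (j < 4)%nat -> r i j = r' i j) ->
  overlap r psi phi = overlap r' psi phi.
Proof.
  intros Hrr. unfold overlap, trace, mmul. f_equal.
  apply csum_ext; intros i Hi. apply csum_ext; intros k Hk.
  rewrite Hrr by lia. reflexivity.
Qed.

Lemma overlap_xstate (A B P1 P2 x : R) (psi phi : nat -> Defs.C) :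
  unit_vec psi -> unit_vec phi ->
  overlap (xstate A B P1 P2 x) psi phi =
  1/4 * (1 + A * bloch_z psi + B * bloch_z phi + P1 * bloch_x psi * bloch_x phi
         + P2 * bloch_y psi * bloch_y phi + x * bloch_z psi * bloch_z phi).
Proof.
  unfold unit_vec, bloch_x, bloch_y, bloch_z.
  destruct (psi 0%nat) as [p0 p0'] eqn:E0, (psi 1%nat) as [p1 p1'] eqn:E1,
           (phi 0%nat) as [f0 f0'] eqn:F0, (phi 1%nat) as [f1 f1'] eqn:F1.
  intros Hpsi Hphi.
  (* the identity holds for unnormalised vectors, with the norms made explicit *)
  transitivity (1/4 * ((Cnorm2 (p0, p0') + Cnorm2 (p1, p1')) * (Cnorm2 (f0, f0') + Cnorm2 (f1, f1'))
     + A * (Cnorm2 (p0, p0') - Cnorm2 (p1, p1')) * (Cnorm2 (f0, f0') + Cnorm2 (f1, f1'))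
     + B * (Cnorm2 (p0, p0') + Cnorm2 (p1, p1')) * (Cnorm2 (f0, f0') - Cnorm2 (f1, f1'))
     + P1 * (2 * (p0 * p1 + p0' * p1')) * (2 * (f0 * f1 + f0' * f1'))
     + P2 * (2 * (p0 * p1' - p0' * p1)) * (2 * (f0 * f1' - f0' * f1))
     + x * (Cnorm2 (p0, p0') - Cnorm2 (p1, p1')) * (Cnorm2 (f0, f0') - Cnorm2 (f1, f1')))).
  - expand_matrices. rewrite E0, E1, F0, F1. cbv beta iota. field.
  - rewrite Hpsi, Hphi. simpl. ring.
Qed.

Definition xoverlap (k p q x a1 a2 a3 b1 b2 b3 : R) : R :=
  1/4 * (1 + k * (a3 + b3) + p * a1 * b1 + q * a2 * b2 + x * a3 * b3).

Definition is_sphere_max (F : R -> R -> R -> R -> R -> R -> R) (m : R) : Prop :=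
  (exists a1 a2 a3 b1 b2 b3, unit3 a1 a2 a3 /\ unit3 b1 b2 b3 /\ F a1 a2 a3 b1 b2 b3 = m) /\
  (forall a1 a2 a3 b1 b2 b3, unit3 a1 a2 a3 -> unit3 b1 b2 b3 -> F a1 a2 a3 b1 b2 b3 <= m).

Lemma is_g_sphere_max (r : Mat) (F : R -> R -> R -> R -> R -> R -> R) (m : R) :
  (forall psi phi, unit_vec psi -> unit_vec phi ->
     overlap r psi phi = F (bloch_x psi) (bloch_y psi) (bloch_z psi)
                           (bloch_x phi) (bloch_y phi) (bloch_z phi)) ->
  is_g r m <-> is_sphere_max F m.
Proof.
  intros HF. split.
  - intros [Hattained Hub]. split.
    + destruct Hattained as [psi [phi [Hpsi [Hphi Hm]]]].
      exists (bloch_x psi), (bloch_y psi), (bloch_z psi),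
             (bloch_x phi), (bloch_y phi), (bloch_z phi).
      rewrite <- HF by assumption. auto using bloch_unit.
    + intros a1 a2 a3 b1 b2 b3 Ha Hb.
      destruct (bloch_onto _ _ _ Ha) as [psi [Hpsi [<- [<- <-]]]].
      destruct (bloch_onto _ _ _ Hb) as [phi [Hphi [<- [<- <-]]]].
      rewrite <- HF by assumption. auto.
  - intros [Hattained Hub]. split.
    + destruct Hattained as [a1 [a2 [a3 [b1 [b2 [b3 [Ha [Hb Hm]]]]]]]].
      destruct (bloch_onto _ _ _ Ha) as [psi [Hpsi [E1 [E2 E3]]]].
      destruct (bloch_onto _ _ _ Hb) as [phi [Hphi [F1 [F2 F3]]]].
      exists psi, phi. split; [assumption | split; [assumption |]].
      rewrite HF by assumption. rewrite E1, E2, E3, F1, F2, F3. exact Hm.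
    + intros psi phi Hpsi Hphi. rewrite HF by assumption.
      auto using bloch_unit.
Qed.

Definition rho_overlap (g1 x : R) : R -> R -> R -> R -> R -> R -> R :=
  xoverlap (cos g1 * sin g1 * (1 + x)) (sin g1 * sin g1 - x * (cos g1 * cos g1))
           (cos g1 * cos g1 - x * (sin g1 * sin g1)) x.

Lemma overlap_rho (g1 x : R) (psi phi : nat -> Defs.C) :
  unit_vec psi -> unit_vec phi ->
  overlap (rho g1 (PI / 2 - g1) x) psi phi =
  rho_overlap g1 x (bloch_x psi) (bloch_y psi) (bloch_z psi)
                   (bloch_x phi) (bloch_y phi) (bloch_z phi).
Proof.
  intros Hpsi Hphi.
  rewrite (overlap_ext _ _ psi phi (rho_xstate g1 (PI / 2 - g1) x)),
          overlap_xstate by assumption.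
  unfold rho_overlap, xoverlap, u_, v_, z1_, z2_. rewrite cos_shift, sin_shift. ring.
Qed.

Lemma dot_le_norm (w1 w2 w3 b1 b2 b3 : R) : unit3 b1 b2 b3 ->
  w1 * b1 + w2 * b2 + w3 * b3 <= sqrt (w1 * w1 + w2 * w2 + w3 * w3).
Proof.
  unfold unit3; intros Hb.
  destruct (Rle_dec (w1 * b1 + w2 * b2 + w3 * b3) 0) as [Hneg | Hpos].
  - pose proof (sqrt_pos (w1 * w1 + w2 * w2 + w3 * w3)); lra.
  - rewrite <- (sqrt_square (w1 * b1 + w2 * b2 + w3 * b3)) by lra.
    apply sqrt_le_1_alt.
    (* Lagrange's identity *)
    assert (Hlagrange : (w1 * w1 + w2 * w2 + w3 * w3) * (b1 * b1 + b2 * b2 + b3 * b3)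
        - (w1 * b1 + w2 * b2 + w3 * b3) * (w1 * b1 + w2 * b2 + w3 * b3)
      = (w1 * b2 - w2 * b1) ^ 2 + (w1 * b3 - w3 * b1) ^ 2 + (w2 * b3 - w3 * b2) ^ 2) by ring.
    rewrite Hb in Hlagrange.
    pose proof (pow2_ge_0 (w1 * b2 - w2 * b1)). pose proof (pow2_ge_0 (w1 * b3 - w3 * b1)).
    pose proof (pow2_ge_0 (w2 * b3 - w3 * b2)). lra.
Qed.

Lemma dot_attains_norm (w1 w2 w3 : R) : exists b1 b2 b3, unit3 b1 b2 b3 /\
  w1 * b1 + w2 * b2 + w3 * b3 = sqrt (w1 * w1 + w2 * w2 + w3 * w3).
Proof.
  unfold unit3.
  destruct (Req_dec (w1 * w1 + w2 * w2 + w3 * w3) 0) as [Hzero | Hnonzero].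
  - exists 0, 0, 1. rewrite Hzero, sqrt_0. assert (w3 = 0) by nra. subst. split; ring.
  - set (n := sqrt (w1 * w1 + w2 * w2 + w3 * w3)).
    assert (Hn2 : n * n = w1 * w1 + w2 * w2 + w3 * w3) by (apply sqrt_sqrt; nra).
    assert (Hn : 0 < n) by (apply sqrt_lt_R0; nra).
    clearbody n.
    exists (w1 / n), (w2 / n), (w3 / n). split; field_simplify_eq; nra.
Qed.

Section Profile.
Variables k p q x : R.

(** The maximum of 4 xoverlap - 1 over b and over (a1, a2) at fixed height a3 = t.
    Maximising over b gives the norm of w = (p a1, q a2, k + x t), and the
    (a1, a2)-part contributes at most max(p^2, q^2) (1 - t^2) to |w|^2. *)
Definition profile (t : R) : R :=
  k * t + sqrt (Rmax (p * p) (q * q) * (1 - t * t) + (k + x * t) * (k + x * t)).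

Lemma profile_bound (a1 a2 a3 b1 b2 b3 : R) : unit3 a1 a2 a3 -> unit3 b1 b2 b3 ->
  xoverlap k p q x a1 a2 a3 b1 b2 b3 <= (1 + profile a3) / 4.
Proof.
  unfold unit3; intros Ha Hb.
  pose proof (dot_le_norm (p * a1) (q * a2) (k + x * a3) b1 b2 b3 Hb) as Hdot.
  assert (Hw : p * a1 * (p * a1) + q * a2 * (q * a2) + (k + x * a3) * (k + x * a3)
               <= Rmax (p * p) (q * q) * (1 - a3 * a3) + (k + x * a3) * (k + x * a3)).
  { assert (p * p * (a1 * a1) <= Rmax (p * p) (q * q) * (a1 * a1))
      by (apply Rmult_le_compat_r; [nra | apply Rmax_l]).
    assert (q * q * (a2 * a2) <= Rmax (p * p) (q * q) * (a2 * a2))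
      by (apply Rmult_le_compat_r; [nra | apply Rmax_r]).
    replace (1 - a3 * a3) with (a1 * a1 + a2 * a2) by lra. lra. }
  apply sqrt_le_1_alt in Hw.
  unfold xoverlap, profile. lra.
Qed.

Lemma profile_attained (t : R) : -1 <= t <= 1 ->
  exists a1 a2 a3 b1 b2 b3, unit3 a1 a2 a3 /\ unit3 b1 b2 b3 /\
    xoverlap k p q x a1 a2 a3 b1 b2 b3 = (1 + profile t) / 4.
Proof.
  intros Ht.
  set (h := sqrt (1 - t * t)).
  assert (Hh : h * h = 1 - t * t) by (apply sqrt_sqrt; nra).
  clearbody h.
  (* put the horizontal part of a along the axis of the larger of |p|, |q| *)
  destruct (Rle_dec (q * q) (p * p)) as [Hpq | Hqp].
  - destruct (dot_attains_norm (p * h) 0 (k + x * t)) as [b1 [b2 [b3 [Hb Hdot]]]].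
    exists h, 0, t, b1, b2, b3. split; [unfold unit3; lra|]. split; [exact Hb|].
    unfold profile. rewrite Rmax_left by lra.
    replace (p * p * (1 - t * t)) with (p * h * (p * h) + 0 * 0) by (rewrite <- Hh; ring).
    rewrite <- Hdot. unfold xoverlap. field.
  - destruct (dot_attains_norm 0 (q * h) (k + x * t)) as [b1 [b2 [b3 [Hb Hdot]]]].
    exists 0, h, t, b1, b2, b3. split; [unfold unit3; lra|]. split; [exact Hb|].
    unfold profile. rewrite Rmax_right by lra.
    replace (q * q * (1 - t * t)) with (0 * 0 + q * h * (q * h)) by (rewrite <- Hh; ring).
    rewrite <- Hdot. unfold xoverlap. field.
Qed.

Lemma profile_continuous (t : R) : -1 <= t <= 1 -> continuity_pt profile t.
Proof.
  intros Ht. unfold profile.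
  apply continuity_pt_plus.
  - apply derivable_continuous_pt. reg.
  - apply (continuity_pt_comp
             (fun t => Rmax (p * p) (q * q) * (1 - t * t) + (k + x * t) * (k + x * t))).
    + apply derivable_continuous_pt. reg.
    + apply continuity_pt_sqrt.
      assert (0 <= Rmax (p * p) (q * q) * (1 - t * t))
        by (apply Rmult_le_pos; [pose proof (Rmax_l (p * p) (q * q)); nra | nra]).
      cbv beta. pose proof (Rle_0_sqr (k + x * t)). unfold Rsqr in *. lra.
Qed.

(** The maximum over S^2 x S^2 exists: it is the maximum of the continuous
    profile on the compact interval [-1, 1]. *)
Lemma sphere_max_exists : exists m, is_sphere_max (xoverlap k p q x) m.
Proof.
  destruct (continuity_ab_maj profile (-1) 1 ltac:(lra) profile_continuous)
    as [t [Hmax Ht]].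
  exists ((1 + profile t) / 4). split.
  - exact (profile_attained t Ht).
  - intros a1 a2 a3 b1 b2 b3 Ha Hb.
    assert (Ha3 : -1 <= a3 <= 1) by (unfold unit3 in Ha; nra).
    pose proof (Hmax a3 Ha3). pose proof (profile_bound _ _ _ _ _ _ Ha Hb). lra.
Qed.

End Profile.

Lemma sym_form_nonneg (p q y z : R) : -p <= q <= p -> 0 <= p / 2 * (y * y + z * z) - q * y * z.
Proof.
  intros Hq.
  replace (p / 2 * (y * y + z * z) - q * y * z)
    with ((p + q) / 4 * ((y - z) * (y - z)) + (p - q) / 4 * ((y + z) * (y + z))) by field.
  apply Rplus_le_le_0_compat; apply Rmult_le_pos; solve [lra | apply Rle_0_sqr].
Qed.

(** Sum-of-squares upper bound for xoverlap when p dominates |q| and |x|: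
    completing the square in the z-components around k/(p-x). *)
Lemma xoverlap_sos_bound (k p q x a1 a2 a3 b1 b2 b3 : R) :
  -p <= q <= p -> -p <= x <= p -> 0 < p - x ->
  unit3 a1 a2 a3 -> unit3 b1 b2 b3 ->
  xoverlap k p q x a1 a2 a3 b1 b2 b3 <= 1/4 * (1 + p + k * k / (p - x)).
Proof.
  unfold unit3; intros Hq Hx Hpx Ha Hb.
  set (t0 := k / (p - x)).
  assert (Hsos : 1/4 * (1 + p + k * k / (p - x)) - xoverlap k p q x a1 a2 a3 b1 b2 b3 =
     1/4 * (p / 2 * ((a1 - b1) * (a1 - b1)) + (p / 2 * (a2 * a2 + b2 * b2) - q * a2 * b2)
     + (p / 2 * ((a3 - t0) * (a3 - t0) + (b3 - t0) * (b3 - t0)) - x * (a3 - t0) * (b3 - t0))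
     + p / 2 * ((1 - (a1 * a1 + a2 * a2 + a3 * a3)) + (1 - (b1 * b1 + b2 * b2 + b3 * b3))))).
  { unfold t0, xoverlap. field. lra. }
  rewrite Ha, Hb in Hsos.
  pose proof (sym_form_nonneg p q a2 b2 Hq).
  pose proof (sym_form_nonneg p x (a3 - t0) (b3 - t0) Hx).
  assert (0 <= p / 2 * ((a1 - b1) * (a1 - b1)))
    by (apply Rmult_le_pos; [lra | apply Rle_0_sqr]).
  lra.
Qed.

Lemma pow_SS (y K : R) : y * y = K -> forall n, y ^ S (S n) = y ^ n * K.
Proof. intros Hy n. simpl. rewrite <- Hy. ring. Qed.

Ltac ring_mod Hc Hr :=
  ring_simplify; repeat rewrite (pow_SS _ _ Hc); repeat rewrite (pow_SS _ _ Hr); ring.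

(** The claimed minimum and minimiser, written in s = sin g1 and r = sqrt 2
    (using cos (2 g1) = 1 - 2 s^2). *)
Definition Mform (s r : R) : R := (1 + (1 - 2 * s * s) + r * s) ^ 2 / (3 + (1 - 2 * s * s)) ^ 2.
Definition Xform (s r : R) : R := 2 * s * (s - r) / (3 + (1 - 2 * s * s)).

Lemma Xform_range (s r : R) : r * r = 2 -> 0 < r -> 0 <= s <= 1 -> -1 <= Xform s r <= 1.
Proof.
  intros Hr2 Hr Hs.
  assert (Hr_bounds : 1 < r < 2) by nra.
  assert (Hden : 0 < 3 + (1 - 2 * s * s)) by nra.
  assert (HX : Xform s r * (3 + (1 - 2 * s * s)) = 2 * s * (s - r))
    by (unfold Xform; field; lra).
  split; nra.
Qed.

Section ClosedForm.
Variables s c r : R.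
Hypothesis unit_sc : s * s + c * c = 1.
Hypothesis sqr_r : r * r = 2.

Let sqr_c : c * c = 1 - s * s.
Proof. lra. Qed.

Let denom_pos : 0 < 3 + (1 - 2 * s * s).
Proof. nra. Qed.

(** The Bloch vector (a1, 0, a3) of the optimal product state |psi>|psi>. *)
Definition sym_a1 : R := (s + r * (c * c)) / (1 + c * c).
Definition sym_a3 : R := c * (r - s) / (1 + c * c).

Lemma sym_unit : unit3 sym_a1 0 sym_a3.
Proof.
  unfold unit3, sym_a1, sym_a3. field_simplify_eq; [ring_mod sqr_c sqr_r | nra].
Qed.

Lemma sym_value (x q : R) :
  xoverlap (c * s * (1 + x)) (s * s - x * (c * c)) q x
           sym_a1 0 sym_a3 sym_a1 0 sym_a3 = Mform s r.
Proof.
  unfold xoverlap, sym_a1, sym_a3, Mform.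
  field_simplify_eq; [ring_mod sqr_c sqr_r | split; nra].
Qed.

(** At x3 = Xform the denominator p - x of the SOS bound equals r s ... *)
Lemma gap_at_Xform : s * s - Xform s r * (c * c) - Xform s r = r * s.
Proof. unfold Xform. field_simplify_eq; [ring_mod sqr_c sqr_r | lra]. Qed.

(** ... and the bound equals Mform. *)
Lemma bound_at_Xform : 0 < s -> 0 < r ->
  1/4 * (1 + (s * s - Xform s r * (c * c))
         + (c * s * (1 + Xform s r)) * (c * s * (1 + Xform s r)) / (r * s)) = Mform s r.
Proof.
  intros Hs Hr. unfold Xform, Mform.
  field_simplify_eq; [ring_mod sqr_c sqr_r | repeat split; nra].
Qed.

Lemma max_at_Xform (a1 a2 a3 b1 b2 b3 : R) :
  0 <= c -> c <= s -> 0 < r -> unit3 a1 a2 a3 -> unit3 b1 b2 b3 ->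
  xoverlap (c * s * (1 + Xform s r)) (s * s - Xform s r * (c * c))
           (c * c - Xform s r * (s * s)) (Xform s r) a1 a2 a3 b1 b2 b3 <= Mform s r.
Proof.
  intros Hc Hcs Hr Ha Hb.
  assert (Hs : 0 < s) by (destruct (Req_dec s 0); nra).
  assert (Hs1 : s <= 1) by nra.
  pose proof (Xform_range s r sqr_r Hr (conj (Rlt_le _ _ Hs) Hs1)) as HX.
  pose proof gap_at_Xform as Hgap.
  rewrite <- (bound_at_Xform Hs Hr), <- Hgap.
  set (X := Xform s r) in *.
  (* p - q = (s^2 - c^2)(1 + X), p + q = 1 - X, p + X = s^2 (1 + X), p - X = r s *)
  assert (0 <= (s * s - c * c) * (1 + X)) by (apply Rmult_le_pos; nra).
  assert (0 <= s * s * (1 + X)) by (apply Rmult_le_pos; nra).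
  apply xoverlap_sos_bound; try assumption; nra.
Qed.

End ClosedForm.

(** Mform is increasing in s on [0, 1]: cross-multiplying the ratio
    N(s)/E(s) (N numerator, E denominator of its square root). *)
Lemma Mform_increasing (a b r : R) : r * r = 2 -> 0 < r -> 0 <= a -> a < b -> b <= 1 ->
  Mform a r < Mform b r.
Proof.
  intros Hr2 Hr Ha Hab Hb.
  assert (Hr1 : 1 < r) by nra.
  set (Na := 1 + (1 - 2 * a * a) + r * a). set (Ea := 3 + (1 - 2 * a * a)).
  set (Nb := 1 + (1 - 2 * b * b) + r * b). set (Eb := 3 + (1 - 2 * b * b)).
  assert (HEa : 0 < Ea) by (unfold Ea; nra). assert (HEb : 0 < Eb) by (unfold Eb; nra).
  assert (HNa : 0 < Na) by (unfold Na; nra).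
  assert (Hcross : Nb * Ea - Na * Eb = (b - a) * (2 * r * ((r - a) * (r - b)))).
  { unfold Na, Nb, Ea, Eb. ring_mod Hr2 Hr2. }
  assert (Hratio : Na / Ea < Nb / Eb).
  { apply (Rmult_lt_reg_r (Ea * Eb)); [nra|].
    replace (Na / Ea * (Ea * Eb)) with (Na * Eb) by (field; lra).
    replace (Nb / Eb * (Ea * Eb)) with (Nb * Ea) by (field; lra).
    assert (0 < (b - a) * (2 * r * ((r - a) * (r - b)))).
    { repeat apply Rmult_lt_0_compat; lra. }
    lra. }
  assert (Hpos : 0 < Na / Ea) by (apply Rdiv_lt_0_compat; lra).
  unfold Mform. fold Na Ea Nb Eb.
  replace (Na ^ 2 / Ea ^ 2) with ((Na / Ea) * (Na / Ea)) by (field; lra).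
  replace (Nb ^ 2 / Eb ^ 2) with ((Nb / Eb) * (Nb / Eb)) by (field; lra).
  nra.
Qed.

Lemma sin_cos_range (g1 : R) : PI / 4 <= g1 <= PI / 2 ->
  sin g1 * sin g1 + cos g1 * cos g1 = 1 /\ 0 <= cos g1 /\ cos g1 <= sin g1 /\
  0 < sin g1 /\ sin g1 <= 1.
Proof.
  intros Hg. pose proof PI_RGT_0.
  pose proof (sin2_cos2 g1) as Hpyth. unfold Rsqr in Hpyth.
  repeat split.
  - exact Hpyth.
  - apply cos_ge_0; lra.
  - rewrite <- sin_shift. apply sin_incr_1; lra.
  - apply sin_gt_0; lra.
  - apply SIN_bound.
Qed.

Lemma sqrt2_sqr : sqrt 2 * sqrt 2 = 2.
Proof. apply sqrt_sqrt; lra. Qed.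

Lemma sqrt2_pos : 0 < sqrt 2.
Proof. apply sqrt_lt_R0; lra. Qed.

Lemma two_inv_sqrt2_sqr : 2 * (1 / sqrt 2) * (1 / sqrt 2) = 1.
Proof. pose proof sqrt2_pos. rewrite <- sqrt2_sqr at 1. field. lra. Qed.

Lemma sqrt2_mul_inv : sqrt 2 * (1 / sqrt 2) = 1.
Proof. pose proof sqrt2_pos. field. lra. Qed.

Lemma Mval_Mform (g1 : R) : Mval g1 = Mform (sin g1) (sqrt 2).
Proof. unfold Mval, Mform. rewrite cos_2a_sin. reflexivity. Qed.

Lemma x3star_Xform (g1 : R) : x3star g1 = Xform (sin g1) (sqrt 2).
Proof. unfold x3star, Xform. rewrite cos_2a_sin. reflexivity. Qed.

Lemma g_rho_exists (g1 x : R) : exists m, is_g (rho g1 (PI / 2 - g1) x) m.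
Proof.
  destruct (sphere_max_exists (cos g1 * sin g1 * (1 + x))
              (sin g1 * sin g1 - x * (cos g1 * cos g1))
              (cos g1 * cos g1 - x * (sin g1 * sin g1)) x) as [m Hm].
  exists m. apply (is_g_sphere_max _ (rho_overlap g1 x)); [apply overlap_rho | exact Hm].
Qed.

(** Lower bound: the symmetric product state already reaches Mval g1. *)
Lemma g_rho_ge_Mval (g1 x m : R) : PI / 4 <= g1 <= PI / 2 ->
  is_g (rho g1 (PI / 2 - g1) x) m -> Mval g1 <= m.
Proof.
  intros Hg Hgm.
  destruct (sin_cos_range g1 Hg) as [Hpyth _].
  apply (is_g_sphere_max _ (rho_overlap g1 x)) in Hgm; [|apply overlap_rho].
  destruct Hgm as [_ Hub].
  rewrite Mval_Mform,
    <- (sym_value _ _ _ Hpyth sqrt2_sqr x (cos g1 * cos g1 - x * (sin g1 * sin g1))).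
  apply Hub; apply (sym_unit _ _ _ Hpyth sqrt2_sqr).
Qed.

Lemma g_rho_at_x3star (g1 : R) : PI / 4 <= g1 <= PI / 2 ->
  is_g (rho g1 (PI / 2 - g1) (x3star g1)) (Mval g1).
Proof.
  intros Hg.
  destruct (sin_cos_range g1 Hg) as [Hpyth [Hc [Hcs _]]].
  apply (is_g_sphere_max _ (rho_overlap g1 (x3star g1))); [apply overlap_rho|].
  rewrite Mval_Mform, x3star_Xform. split.
  - exists (sym_a1 (sin g1) (cos g1) (sqrt 2)), 0, (sym_a3 (sin g1) (cos g1) (sqrt 2)),
           (sym_a1 (sin g1) (cos g1) (sqrt 2)), 0, (sym_a3 (sin g1) (cos g1) (sqrt 2)).
    pose proof (sym_unit _ _ _ Hpyth sqrt2_sqr).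
    repeat split; try assumption.
    apply (sym_value _ _ _ Hpyth sqrt2_sqr).
  - intros a1 a2 a3 b1 b2 b3 Ha Hb.
    apply (max_at_Xform _ _ _ Hpyth sqrt2_sqr); try assumption. exact sqrt2_pos.
Qed.

Theorem mainTheorem4 :
  (forall g1 : R, PI / 4 <= g1 <= PI / 2 ->
     let g2 := PI / 2 - g1 in
     (* g(rho(x3)) is well defined (the max exists) for every x3 in [-1,1] *)
     (forall x3 : R, -1 <= x3 <= 1 -> exists m, is_g (rho g1 g2 x3) m) /\
     (* Mval g1 is a lower bound of g(rho(x3)) on [-1,1] *)
     (forall x3 m : R, -1 <= x3 <= 1 -> is_g (rho g1 g2 x3) m -> Mval g1 <= m) /\
     (* ... attained at x3star g1 *)
     (-1 <= x3star g1 <= 1 /\ is_g (rho g1 g2 (x3star g1)) (Mval g1))) /\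
  (* the minimum value is increasing in g1 on [pi/4, pi/2] *)
  (forall a b : R, PI / 4 <= a -> a < b -> b <= PI / 2 -> Mval a < Mval b) /\
  Mval (PI / 4) = 4 / 9 /\ x3star (PI / 4) = -1 / 3.
Proof.
  pose proof PI_RGT_0 as HPI.
  split; [|split; [|split]].
  - intros g1 Hg g2. subst g2.
    destruct (sin_cos_range g1 Hg) as [_ [_ [_ [Hs Hs1]]]].
    split; [|split; [|split]].
    + intros x3 _. apply g_rho_exists.
    + intros x3 m _. apply g_rho_ge_Mval, Hg.
    + rewrite x3star_Xform. apply Xform_range; [exact sqrt2_sqr | exact sqrt2_pos | lra].
    + apply g_rho_at_x3star, Hg.
  - (* Mval = Mform (sin g1) and sin is increasing on [pi/4, pi/2] *)
    intros a b Ha Hab Hb. rewrite !Mval_Mform.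
    apply Mform_increasing; [exact sqrt2_sqr | exact sqrt2_pos | | | apply SIN_bound].
    + left; apply sin_gt_0; lra.
    + apply sin_increasing_1; lra.
  - rewrite Mval_Mform, sin_PI4. unfold Mform.
    rewrite two_inv_sqrt2_sqr, sqrt2_mul_inv. field.
  - rewrite x3star_Xform, sin_PI4. unfold Xform.
    rewrite Rmult_minus_distr_l, !two_inv_sqrt2_sqr.
    replace (2 * (1 / sqrt 2) * sqrt 2) with 2 by (pose proof sqrt2_pos; field; lra).
    field.
Qed.
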